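(* For every centric $s$-vector $s$ and centric $y$-vector $y$, $$W_s=\mathrm{aff}(W_s)\cap W\qquad\text{and}\qquad W_y=\mathrm{aff}(W_y)\cap W,$$ where $\mathrm{aff}$ denotes affine hull.
   Context: Let $A\in\mathbb R^{m\times n}$ have full column rank $n\le m$ and $b\in\mathbb R^m$ be such that $\{x:Ax\le b\}$ is bounded with nonempty interior. For $w\in\mathbb R^m_{++}$ the weighted center of $w$ is the unique $(x,y,s)$ with $Ax+s=b$, $s>0$, $A^\top y=0$, $\mathrm{Diag}(s)y=w$ ($s$-vector $s$, $y$-vector $y$). $W=\{w\in\mathbb R^m:w>0,\ e^\top w=1\}$. Centric $s$-/$y$-vectors are the $s$-/$y$-vectors of weighted centers of elements of $W$. For centric $s$, $W_s=\{w\in W:$ $s$-vector of $w$ is $s\}$; for centric $y$, $W_y=\{w\in W:$ $y$-vector of $w$ is $y\}$. *)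

(* the statement is purely algebraic/order-theoretic, so it is
   stated over an arbitrary real field R (which includes the real numbers). *)
From HB Require Import structures.
From mathcomp Require Import all_boot all_order all_algebra.
Set Implicit Arguments. Unset Strict Implicit. Unset Printing Implicit Defensive.
Import Order.TTheory GRing.Theory Num.Theory.
Local Open Scope ring_scope.

Section Defs.
Variable R : realFieldType.

Definition poly_bounded m n (A : 'M[R]_(m, n)) (b : 'cV[R]_m) : Prop :=
  exists M : R, forall x : 'cV[R]_n,
    (forall i, (A *m x) i 0 <= b i 0) -> forall j, `|x j 0| <= M.

Definition poly_nonempty_interior m n (A : 'M[R]_(m, n)) (b : 'cV[R]_m) : Prop :=
  exists (x0 : 'cV[R]_n) (eps : R), 0 < eps /\
    forall z : 'cV[R]_n, (forall j, `|z j 0 - x0 j 0| <= eps) ->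
      forall i, (A *m z) i 0 <= b i 0.

Definition weighted_center m n (A : 'M[R]_(m, n)) (b : 'cV[R]_m)
    (w : 'cV[R]_m) (x : 'cV[R]_n) (y s : 'cV[R]_m) : Prop :=
  A *m x + s = b /\ (forall i, 0 < s i 0) /\ A^T *m y = 0 /\
  (forall i, s i 0 * y i 0 = w i 0).

Definition inW m (w : 'cV[R]_m) : Prop :=
  (forall i, 0 < w i 0) /\ \sum_(i < m) w i 0 = 1.

Definition svec_of m n (A : 'M[R]_(m, n)) b (w s : 'cV[R]_m) : Prop :=
  exists x y, weighted_center A b w x y s.
Definition yvec_of m n (A : 'M[R]_(m, n)) b (w y : 'cV[R]_m) : Prop :=
  exists x s, weighted_center A b w x y s.

Definition centric_s m n (A : 'M[R]_(m, n)) b (s : 'cV[R]_m) : Prop :=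
  exists w, inW w /\ svec_of A b w s.
Definition centric_y m n (A : 'M[R]_(m, n)) b (y : 'cV[R]_m) : Prop :=
  exists w, inW w /\ yvec_of A b w y.

Definition W_s m n (A : 'M[R]_(m, n)) b (s : 'cV[R]_m) : 'cV[R]_m -> Prop :=
  fun w => inW w /\ svec_of A b w s.
Definition W_y m n (A : 'M[R]_(m, n)) b (y : 'cV[R]_m) : 'cV[R]_m -> Prop :=
  fun w => inW w /\ yvec_of A b w y.

Definition aff m (S : 'cV[R]_m -> Prop) : 'cV[R]_m -> Prop :=
  fun v => exists (k : nat) (p : 'I_k -> 'cV[R]_m) (c : 'I_k -> R),
    (forall i, S (p i)) /\ \sum_(i < k) c i = 1 /\ v = \sum_(i < k) c i *: p i.

End Defs.

From HB Require Import structures.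
From mathcomp Require Import all_boot all_order all_algebra.
From Stdlib Require Import ClassicalEpsilon.
Import Order.TTheory GRing.Theory Num.Theory.
Local Open Scope ring_scope.

(* Both identities are instances of one affine fact: if a
   set S is the trace on W of a set T that is closed under affine
   combinations, then S = aff(S) /\ W, because aff(S) is contained in T.
   - For a fixed s, the set of w whose s-vector is s is affinely closed:
     w = Diag(s) y with y ranging over the linear space {A^T y = 0}, and the
     point x with Ax + s = b is shared by all of them.  Thus W_s is the trace
     on W of an affinely closed set.
   - For a fixed y, drop the condition s > 0 from the definition of
     "y is the y-vector of w"; the relaxed set is affinely closed (x and s
     enter linearly), and when y > 0 (which holds for a centric y) the
     condition s > 0 is recovered from w > 0 via s_i y_i = w_i. *)

Section AffineHull.
Context {R : realFieldType} {m : nat}.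

Definition affine_closed (T : 'cV[R]_m -> Prop) : Prop :=
  forall k (p : 'I_k -> 'cV[R]_m) (c : 'I_k -> R),
    (forall i, T (p i)) -> \sum_(i < k) c i = 1 -> T (\sum_(i < k) c i *: p i).

Lemma aff_self (S : 'cV[R]_m -> Prop) w : S w -> aff S w.
Proof.
move=> Sw; exists 1%N, (fun _ => w), (fun _ => 1); split => //.
by rewrite !big_ord1 scale1r.
Qed.

Lemma aff_sub_closed (S T : 'cV[R]_m -> Prop) :
  affine_closed T -> (forall v, S v -> T v) -> forall w, aff S w -> T w.
Proof. by move=> closT sST w [k [p [c [Sp [c1 ->]]]]]; apply: closT => // i; apply: sST. Qed.

Lemma trace_of_affine_closed (S T : 'cV[R]_m -> Prop) :
  (forall w, S w <-> inW w /\ T w) -> affine_closed T ->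
  forall w, S w <-> aff S w /\ inW w.
Proof.
move=> defS closT w; split=> [Sw | [affSw Ww]].
  by split; [apply: aff_self | case/defS: Sw].
by apply/defS; split=> //; apply: aff_sub_closed affSw => // v /defS[].
Qed.

Lemma affine_comb_index {k} {c : 'I_k -> R} : \sum_(i < k) c i = 1 -> 'I_k.
Proof.
case: k c => [|k] c; last by move=> _; exact: ord0.
by rewrite big_ord0 => /esym/eqP; rewrite oner_eq0.
Qed.

Lemma comb_entry {k} (c : 'I_k -> R) (p : 'I_k -> 'cV[R]_m) j :
  (\sum_(i < k) c i *: p i) j 0 = \sum_(i < k) c i * p i j 0.
Proof. by rewrite summxE; apply: eq_bigr => i _; rewrite mxE. Qed.

Lemma affine_comb_const {k} {c : 'I_k -> R} (v : 'cV[R]_m) :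
  \sum_(i < k) c i = 1 -> \sum_(i < k) c i *: v = v.
Proof. by move=> c1; rewrite -scaler_suml c1 scale1r. Qed.

End AffineHull.

Lemma mulmx_comb {R : realFieldType} {m n k} (A : 'M[R]_(m, n))
    (c : 'I_k -> R) (x : 'I_k -> 'cV[R]_n) :
  A *m (\sum_(i < k) c i *: x i) = \sum_(i < k) c i *: (A *m x i).
Proof. by rewrite mulmx_sumr; apply: eq_bigr => i _; rewrite scalemxAr. Qed.

Section WeightedCenters.
Context {R : realFieldType} {m n : nat} (A : 'M[R]_(m, n)) (b : 'cV[R]_m).

(* The weights with a prescribed s-vector form an affinely closed set:
   keep the x of one of them and combine the y-vectors. *)
Lemma svec_affine_closed (s : 'cV[R]_m) :
  affine_closed (fun w => svec_of A b w s).
Proof.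
move=> k p c svec_p c1.
have [xy wc_p] : exists xy : 'I_k -> 'cV[R]_n * 'cV[R]_m,
    forall i, weighted_center A b (p i) (xy i).1 (xy i).2 s.
  apply: (choice (fun i xy => weighted_center A b (p i) xy.1 xy.2 s)) => i.
  by have [x [y wc]] := svec_p i; exists (x, y).
have i0 := affine_comb_index c1.
have [fit [spos _]] := wc_p i0.
exists (xy i0).1, (\sum_(i < k) c i *: (xy i).2); do 2!split=> //; split.
  by rewrite mulmx_comb big1 // => i _; have [_ [_ [-> _]]] := wc_p i; rewrite scaler0.
move=> j; rewrite !comb_entry mulr_sumr; apply: eq_bigr => i _.
by have [_ [_ [_ <-]]] := wc_p i; rewrite mulrCA.
Qed.

Definition yvec_relaxed (y w : 'cV[R]_m) : Prop :=
  A^T *m y = 0 /\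
  exists (x : 'cV[R]_n) (s : 'cV[R]_m),
    A *m x + s = b /\ forall i, s i 0 * y i 0 = w i 0.

(* The relaxed set is affinely closed: x and s enter linearly. *)
Lemma yvec_relaxed_affine_closed (y : 'cV[R]_m) :
  affine_closed (yvec_relaxed y).
Proof.
move=> k p c rel_p c1.
have i0 := affine_comb_index c1.
split; first by case: (rel_p i0).
have [xs fit_p] : exists xs : 'I_k -> 'cV[R]_n * 'cV[R]_m, forall i,
    A *m (xs i).1 + (xs i).2 = b /\ forall j, (xs i).2 j 0 * y j 0 = p i j 0.
  apply: (choice (fun i xs => A *m xs.1 + xs.2 = b /\
                              forall j, xs.2 j 0 * y j 0 = p i j 0)) => i.
  by have [_ [x [s fit]]] := rel_p i; exists (x, s).
exists (\sum_(i < k) c i *: (xs i).1), (\sum_(i < k) c i *: (xs i).2); split.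
  rewrite mulmx_comb -big_split -(affine_comb_const b c1).
  by apply: eq_bigr => i _ /=; rewrite -scalerDr; case: (fit_p i) => ->.
move=> j; rewrite !comb_entry mulr_suml; apply: eq_bigr => i _.
by case: (fit_p i) => _ <-; rewrite mulrA.
Qed.

(* A centric y-vector is positive, since s_i y_i = w_i with s, w > 0. *)
Lemma centric_y_pos (y : 'cV[R]_m) : centric_y A b y -> forall i, 0 < y i 0.
Proof.
move=> [w [[wpos _] [x [s [_ [spos [_ sy]]]]]]] i.
by have := wpos i; rewrite -sy pmulr_rgt0.
Qed.

(* For y > 0, W_y is the trace on W of the relaxed set: s > 0 follows from
   s_i y_i = w_i > 0. *)
Lemma W_y_relaxed (y : 'cV[R]_m) : (forall i, 0 < y i 0) ->
  forall w, W_y A b y w <-> inW w /\ yvec_relaxed y w.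
Proof.
move=> ypos w; split=> [[Ww [x [s [fit [_ [Ay sy]]]]]] | [Ww [Ay [x [s [fit sy]]]]]].
  by split=> //; split=> //; exists x, s.
split=> //; exists x, s; split=> //; split=> [i | //].
by have := Ww.1 i; rewrite -sy (pmulr_lgt0 _ (ypos i)).
Qed.

End WeightedCenters.

Theorem lemmaA4 (R : realFieldType) (m n : nat) (A : 'M[R]_(m, n)) (b : 'cV[R]_m)
  (hnm : (n <= m)%N) (hrank : \rank A = n)
  (hbd : poly_bounded A b) (hint : poly_nonempty_interior A b) :
  (forall s : 'cV[R]_m, centric_s A b s ->
     forall w : 'cV[R]_m, W_s A b s w <-> (aff (W_s A b s) w /\ inW w)) /\
  (forall y : 'cV[R]_m, centric_y A b y ->
     forall w : 'cV[R]_m, W_y A b y w <-> (aff (W_y A b y) w /\ inW w)).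
Proof.
split=> [s _ | y ycentric].
  by apply: trace_of_affine_closed (svec_affine_closed A b s).
apply: trace_of_affine_closed (yvec_relaxed_affine_closed A b y).
by apply: W_y_relaxed; apply: centric_y_pos ycentric.
Qed.
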